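(* In the setting of the weighted M-posterior, assume there is $\delta>0$ such that the prior density $\pi$ is continuous and positive on the ball $B_{\theta^*}(\delta)\subseteq\Theta$, and that the Weighted M-LAN condition holds. Then for any $\eta,\epsilon>0$ there exist a sequence $r_n\to+\infty$ and an integer $N(\eta,\epsilon)$ such that for all $n>N(\eta,\epsilon)$, $$P_0\Big(\sup_{g,h\in\overline B_{\mathbf 0}(r_n)}f_n(g,h)>\eta\Big)\le\epsilon,$$ where $\overline B_{\mathbf 0}(r)$ is the closed ball of radius $r$ about $\mathbf 0\in\mathbb R^p$.
   Context: $X_1,X_2,\dots$ i.i.d. from $P_0$, $\theta^*$ interior to $\Theta\subseteq\mathbb R^p$, loss $\rho$, score $\psi=\nabla_\theta\rho$, positive weights $\alpha_i$ with $\limsup_n n^{-1}\sum_{i\le n}\alpha_i^2<\infty$, $\bar\alpha_n=n^{-1}\sum_{i\le n}\alpha_i$, weighted M-estimator $\hat\theta^{\boldsymbol\alpha}_\rho$ solving $\sum_i\alpha_i\psi(X_i,\theta)=0$, weighted M-posterior $\pi_n^\rho(\theta\mid F_n^{\boldsymbol\alpha})\propto\exp(-\sum_{i=1}^n\alpha_i\rho(X_i,\theta))\pi(\theta)$. Set $\Delta_n=\sqrt n(\hat\theta^{\boldsymbol\alpha}_\rho-\theta^* )$, $\phi_n(h)=\phi(h\mid\Delta_n,V_{\theta^*}^{-1}/\bar\alpha_n)$ (normal density), $\pi^{\mathrm{W}}_n(h)=n^{-p/2}\pi_n^\rho(\theta^*+h/\sqrt n\mid F_n^{\boldsymbol\alpha})$,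 and $f_n(g,h)=\big\{1-\frac{\phi_n(h)\,\pi^{\mathrm W}_n(g)}{\pi^{\mathrm W}_n(h)\,\phi_n(g)}\big\}^+$. Weighted M-LAN condition: there is a positive definite $V_{\theta^*}$ such that $R_{n,\boldsymbol\alpha}(h)=\sum_{i=1}^n\alpha_i(\rho(X_i,\theta^* )-\rho(X_i,\theta^*+h/\sqrt n))-h^\top\bar\alpha_nV_{\theta^*}\Delta_n+\frac12h^\top\bar\alpha_nV_{\theta^*}h$ satisfies $\sup_{h\in K}|R_{n,\boldsymbol\alpha}(h)|\to0$ in $P_0$-probability for every compact $K$. *)

From HB Require Import structures.
From mathcomp Require Import all_boot all_order all_algebra.
From mathcomp Require Import all_classical all_reals all_analysis.
Set Implicit Arguments. Unset Strict Implicit. Unset Printing Implicit Defensive.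
Import Order.TTheory GRing.Theory Num.Theory.
Import numFieldNormedType.Exports.
Local Open Scope classical_set_scope.
Local Open Scope ring_scope.

Section Defs.
Variable R : realType.

Definition enorm (p : nat) (x : 'rV[R]_p) : R := Num.sqrt (\sum_(j < p) x 0 j ^+ 2).
Definition eball (p : nat) (c : 'rV[R]_p) (r : R) : set 'rV[R]_p :=
  [set x | enorm (x - c) < r].
Definition ecball (p : nat) (c : 'rV[R]_p) (r : R) : set 'rV[R]_p :=
  [set x | enorm (x - c) <= r].

Definition bform (p : nat) (x : 'rV[R]_p) (M : 'M[R]_p) (y : 'rV[R]_p) : R :=
  (x *m M *m y^T) 0 0.

Definition posdef (p : nat) (M : 'M[R]_p) : Prop :=
  M^T = M /\ forall x : 'rV[R]_p, x != 0 -> 0 < bform x M x.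

Definition normal_pdf (p : nat) (m : 'rV[R]_p) (S : 'M[R]_p) (h : 'rV[R]_p) : R :=
  ((Num.sqrt (2 * pi)) ^+ p)^-1 * (Num.sqrt (\det S))^-1 *
  expR (- (bform (h - m) (invmx S) (h - m)) / 2).

Definition outerP d (T : measurableType d) (P : probability T R) (A : set T) : \bar R :=
  ereal_inf [set P B | B in [set B | measurable B /\ A `<=` B]].

Definition iid d d' (Om : measurableType d) (Tx : measurableType d')
  (P : probability Om R) (P0 : probability Tx R) (X : nat -> Om -> Tx) : Prop :=
  (forall i, measurable_fun setT (X i)) /\
  (forall i A, measurable A -> P (X i @^-1` A) = P0 A) /\
  (forall (I : seq nat) (A : nat -> set Tx), uniq I -> (forall i, measurable (A i)) ->
     P (\bigcap_(i in [set i | i \in I]) (X i @^-1` A i)) =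
     (\prod_(i <- I) P (X i @^-1` A i))%E).

(* average weight alpha-bar_n, indices i = 0..n-1 stand for 1..n *)
Definition abar (alpha : nat -> R) (n : nat) : R := (n%:R)^-1 * \sum_(i < n) alpha i.

Definition sqn (n : nat) : R := Num.sqrt (n%:R).

Definition Delta (p : nat) (thetahat : 'rV[R]_p) (tstar : 'rV[R]_p) (n : nat) : 'rV[R]_p :=
  sqn n *: (thetahat - tstar).

Definition Mpost d (Tx : measurableType d) (p : nat) (rho : Tx -> 'rV[R]_p -> R)
  (prior : 'rV[R]_p -> R) (Theta : set 'rV[R]_p) (alpha : nat -> R)
  (xs : nat -> Tx) (n : nat) (Z : R) (theta : 'rV[R]_p) : R :=
  expR (- \sum_(i < n) alpha i * rho (xs i) theta) * prior theta * \1_Theta theta / Z.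

Definition piW d (Tx : measurableType d) (p : nat) (rho : Tx -> 'rV[R]_p -> R)
  (prior : 'rV[R]_p -> R) (Theta : set 'rV[R]_p) (alpha : nat -> R)
  (xs : nat -> Tx) (n : nat) (Z : R) (tstar : 'rV[R]_p) (h : 'rV[R]_p) : R :=
  ((sqn n) ^+ p)^-1 * Mpost rho prior Theta alpha xs n Z (tstar + (sqn n)^-1 *: h).

Definition LANrem d (Tx : measurableType d) (p : nat) (rho : Tx -> 'rV[R]_p -> R)
  (alpha : nat -> R) (xs : nat -> Tx) (n : nat) (V : 'M[R]_p)
  (tstar Dn h : 'rV[R]_p) : R :=
  \sum_(i < n) alpha i * (rho (xs i) tstar - rho (xs i) (tstar + (sqn n)^-1 *: h))
  - abar alpha n * bform h V Dn + 2^-1 * (abar alpha n * bform h V h).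

Definition fn d (Tx : measurableType d) (p : nat) (rho : Tx -> 'rV[R]_p -> R)
  (prior : 'rV[R]_p -> R) (Theta : set 'rV[R]_p) (alpha : nat -> R)
  (xs : nat -> Tx) (n : nat) (Z : R) (V : 'M[R]_p) (tstar Dn g h : 'rV[R]_p) : R :=
  let phin := normal_pdf Dn ((abar alpha n)^-1 *: invmx V) in
  let pw := piW rho prior Theta alpha xs n Z tstar in
  Num.max 0 (1 - (phin h * pw g) / (pw h * phin g)).

End Defs.

(* On a fixed ball of radius k the weighted M-LAN expansion writes the local
   posterior as a constant times prior(tstar + h/sqrt n) exp(R_n(h)) times the
   Gaussian kernel of N(Delta_n, V^-1/abar_n), so the Gaussian factors cancel and
   f_n(g,h) = (1 - prior(tstar + g/sqrt n)/prior(tstar + h/sqrt n) exp(R_n(g) - R_n(h)))^+.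
   For n large both prior arguments lie in a small ball where the prior is close to
   prior(tstar) > 0, and off an event of small outer probability |R_n| <= eta/4 on the
   ball, so f_n <= eta there.  A diagonal argument lets the radius grow slowly with n. *)

From Pilot Require Import Defs.
From mathcomp Require Import all_boot all_order all_algebra.
From mathcomp Require Import all_classical all_reals all_analysis.
From mathcomp Require Import ring lra zify.
Set Implicit Arguments. Unset Strict Implicit. Unset Printing Implicit Defensive.
Import Order.TTheory GRing.Theory Num.Theory.
Import numFieldNormedType.Exports.
Local Open Scope classical_set_scope.
Local Open Scope ring_scope.

Section QuadraticForms.
Variables (R : realType) (p : nat).
Implicit Types (x y z : 'rV[R]_p) (M N : 'M[R]_p).

Lemma bformDl x y z M : bform (x + y) M z = bform x M z + bform y M z.
Proof. by rewrite /bform !mulmxDl mxE. Qed.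

Lemma bformNl x z M : bform (- x) M z = - bform x M z.
Proof. by rewrite /bform !mulNmx mxE. Qed.

Lemma bformDr x y z M : bform z M (x + y) = bform z M x + bform z M y.
Proof. by rewrite /bform linearD /= mulmxDr mxE. Qed.

Lemma bformNr x z M : bform z M (- x) = - bform z M x.
Proof. by rewrite /bform linearN /= mulmxN mxE. Qed.

Lemma bformZm a x y M : bform x (a *: M) y = a * bform x M y.
Proof. by rewrite /bform -scalemxAr -scalemxAl mxE. Qed.

Lemma bformDm x y M N : bform x (M + N) y = bform x M y + bform x N y.
Proof. by rewrite /bform mulmxDr mulmxDl mxE. Qed.

Lemma bformC x y M : M^T = M -> bform y M x = bform x M y.
Proof.
move=> MT; rewrite /bform -[in LHS](trmxK (y *m M *m x^T)) mxE.
by rewrite !trmx_mul trmxK MT mulmxA.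
Qed.

Lemma bform_subsq x y M : M^T = M ->
  bform (x - y) M (x - y) = bform x M x - 2 * bform x M y + bform y M y.
Proof.
move=> MT; rewrite !(bformDl, bformNl, bformDr, bformNr) (bformC x y MT); ring.
Qed.

Lemma bform1 x : bform x 1%:M x = \sum_(j < p) x 0 j ^+ 2.
Proof. by rewrite /bform mulmx1 mxE; apply: eq_bigr => j _; rewrite mxE expr2. Qed.

Lemma sumsq_gt0 x : x != 0 -> 0 < \sum_(j < p) x 0 j ^+ 2.
Proof.
move=> x_neq0; have [j xj_neq0] : exists j, x 0 j != 0.
  apply/existsP; apply: contraNT x_neq0; rewrite negb_exists => /forallP x0.
  by apply/eqP/matrixP => i k; rewrite ord1 mxE; apply/eqP/negPn/x0.
rewrite (bigD1 j) //=; apply: ltr_pwDl; first by rewrite exprn_even_gt0.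
by apply: sumr_ge0 => i _; rewrite sqr_ge0.
Qed.

Lemma enorm_ge0 x : 0 <= enorm x.
Proof. exact: sqrtr_ge0. Qed.

Lemma enorm0 : enorm (0 : 'rV[R]_p) = 0.
Proof. by rewrite /enorm big1 ?sqrtr0 // => j _; rewrite mxE expr0n. Qed.

Lemma eball_center (c : 'rV[R]_p) (r : R) : 0 < r -> eball c r c.
Proof. by rewrite /eball /= subrr enorm0. Qed.

Lemma enormZ (c : R) x : enorm (c *: x) = `|c| * enorm x.
Proof.
rewrite /enorm (eq_bigr (fun j => c ^+ 2 * x 0 j ^+ 2)); last first.
  by move=> j _; rewrite mxE exprMn.
by rewrite -mulr_sumr sqrtrM ?sqr_ge0 // sqrtr_sqr.
Qed.

Lemma entry_le_enorm x (j : 'I_p) : `|x 0 j| <= enorm x.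
Proof.
rewrite /enorm -sqrtr_sqr; apply: ler_wsqrtr.
by rewrite (bigD1 j) //= lerDl; apply: sumr_ge0 => i _; exact: sqr_ge0.
Qed.

Lemma normr_le_enorm x : `|x| <= enorm x.
Proof.
change (mx_norm x <= enorm x).
have [->|] := eqVneq (mx_norm x) 0; first exact: enorm_ge0.
by move=> /mx_norm_neq0 [[i j] ->] /=; rewrite ord1; exact: entry_le_enorm.
Qed.

Lemma det_segment_neq0 M t : posdef M -> 0 <= t <= 1 ->
  \det ((1 - t)%:M + t *: M) != 0.
Proof.
move=> [_ Mpos] /andP[t_ge0 t_le1]; apply/negP => /det0P [v v_neq0 v_ker].
have : bform v ((1 - t)%:M + t *: M) v = 0 by rewrite /bform v_ker mul0mx mxE.
rewrite bformDm bformZm -scalemx1 bformZm bform1.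
have := sumsq_gt0 v_neq0; have := Mpos v v_neq0; nra.
Qed.

(* [(1 - t) I + t M] is positive definite for [t] in [[0, 1]], so its determinant,
   a polynomial in [t] equal to [1] at [t = 0], has no root there. *)
Lemma posdef_det_gt0 M : posdef M -> 0 < \det M.
Proof.
move=> Mpd.
pose q : {poly R} := \det (\matrix_(i, j) ((1 - 'X) * ((i == j)%:R)%:P + 'X * (M i j)%:P)).
have qE t : q.[t] = \det ((1 - t)%:M + t *: M).
  rewrite /q -horner_evalE -det_map_mx; congr (\det _).
  by apply/matrixP => i j; rewrite !mxE /= horner_evalE !hornerE /= mulr_natr.
rewrite ltNge; apply/negP => det_le0.
have [t t01 /rootP] : exists2 t : R, 0 <= t <= 1 & root (- q) t.
  apply: poly_ivt; first lra.
  rewrite !hornerN !qE subr0 scale0r addr0 det1 subrr scale1r -scalemx1 scale0r add0r.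
  lra.
by rewrite hornerN qE => /eqP; rewrite oppr_eq0; apply/negP/det_segment_neq0.
Qed.

Lemma posdef_unitmx M : posdef M -> M \in unitmx.
Proof. by move=> /posdef_det_gt0 det_gt0; rewrite unitmxE unitfE gt_eqF. Qed.

End QuadraticForms.

Section NormalDensity.
Variables (R : realType) (p : nat).
Implicit Types (m x g h : 'rV[R]_p) (S M : 'M[R]_p).

(* [Defs.normal_pdf] is qualified: MathComp-Analysis has a univariate [normal_pdf]. *)
Definition gauss_exponent M m x : R := bform x M m - bform x M x / 2.

Lemma normal_pdf_gt0 m S x : 0 < \det S -> 0 < Defs.normal_pdf m S x.
Proof.
move=> detS; rewrite /Defs.normal_pdf !mulr_gt0 ?expR_gt0 // invr_gt0 ?sqrtr_gt0 //.
by rewrite exprn_gt0 // sqrtr_gt0 mulr_gt0 // pi_gt0.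
Qed.

Lemma normal_pdfE m S x : (invmx S)^T = invmx S ->
  Defs.normal_pdf m S x = Defs.normal_pdf m S 0 * expR (gauss_exponent (invmx S) m x).
Proof.
move=> ST; rewrite /Defs.normal_pdf -[RHS]mulrA -expRD sub0r bform_subsq //.
by rewrite bformNl bformNr opprK; congr (_ * expR _); rewrite /gauss_exponent; field.
Qed.

Lemma normal_pdf_ratio m S g h : 0 < \det S -> (invmx S)^T = invmx S ->
  Defs.normal_pdf m S h / Defs.normal_pdf m S g =
  expR (gauss_exponent (invmx S) m h - gauss_exponent (invmx S) m g).
Proof.
move=> detS ST; rewrite (normal_pdfE m h ST) (normal_pdfE m g ST) expRD expRN.
by field; rewrite !gt_eqF ?expR_gt0 ?normal_pdf_gt0.
Qed.

Lemma invmx_scale_inv (a : R) M : posdef M -> 0 < a ->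
  invmx (a^-1 *: invmx M) = a *: M.
Proof.
move=> /posdef_unitmx Mu a_gt0; rewrite invmxZ ?invmxK ?invrK //.
by rewrite unitmxZ ?unitmx_inv // unitfE invr_eq0 gt_eqF.
Qed.

Lemma det_scale_inv_gt0 (a : R) M : posdef M -> 0 < a -> 0 < \det (a^-1 *: invmx M).
Proof.
move=> Mpd a_gt0; rewrite detZ det_inv mulr_gt0 ?exprn_gt0 ?invr_gt0 //.
exact: posdef_det_gt0.
Qed.

End NormalDensity.

Section RatioBounds.
Variable R : realType.
Implicit Types a b c x y eta : R.

Lemma ratio_ge_of_near c a b eta : 0 < c -> 0 <= a -> 0 < b ->
  `|c - a| < c * eta / 4 -> `|c - b| < c * eta / 4 -> 1 - eta / 2 <= a / b.
Proof.
move=> c_gt0 a_ge0 b_gt0; rewrite !ltr_norml => /andP[_ ca] /andP[cb _].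
rewrite ler_pdivlMr //; have [eta_le2|eta_gt2] := lerP eta 2; last first.
  have : 0 < (eta / 2 - 1) * b by rewrite mulr_gt0 //; lra.
  nra.
have : (1 - eta / 2) * b <= (1 - eta / 2) * (c + c * eta / 4).
  by apply: ler_wpM2l; lra.
have := mulr_ge0 (ltW c_gt0) (sqr_ge0 eta).
nra.
Qed.

Lemma expRB_ge_of_small x y eta : `|x| <= eta / 4 -> `|y| <= eta / 4 ->
  1 - eta / 2 <= expR (x - y).
Proof.
rewrite !ler_norml => /andP[x_ge x_le] /andP[y_ge y_le].
by apply: le_trans (expR_ge1Dx _); lra.
Qed.

Lemma max0_1_mul_le a b eta : 0 <= eta -> 0 <= a -> 0 <= b ->
  1 - eta / 2 <= a -> 1 - eta / 2 <= b -> Num.max 0 (1 - a * b) <= eta.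
Proof.
move=> eta_ge0 a_ge0 b_ge0 a_ge b_ge; rewrite ge_max eta_ge0 /=.
have [eta_le2|eta_gt2] := lerP eta 2; last by have := mulr_ge0 a_ge0 b_ge0; lra.
have : (1 - eta / 2) * (1 - eta / 2) <= a * b by apply: ler_pM => //; lra.
nra.
Qed.

End RatioBounds.

Section Diagonal.
Variable f : nat -> nat.

Fixpoint majorant k : nat := if k is k'.+1 then maxn (majorant k').+1 (f k) else f 0.

(* [diag_index n] is the largest [k] with [majorant k <= n], or [0] if there is none. *)
Fixpoint diag_index n : nat :=
  if n is n'.+1 then
    if (majorant (diag_index n').+1 <= n'.+1)%N then (diag_index n').+1 else diag_index n'
  else 0.

Lemma majorant_ge k : (f k <= majorant k)%N.
Proof. by case: k => //= k; exact: leq_maxr. Qed.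

Lemma majorant_lt k : (majorant k < majorant k.+1)%N.
Proof. exact: leq_maxl. Qed.

Lemma majorant_mono : {homo majorant : j k / (j <= k)%N}.
Proof. exact: homo_leq leqnn leq_trans (fun k => ltnW (majorant_lt k)). Qed.

Lemma diag_index_spec n :
  ((majorant (diag_index n) <= n)%N \/ diag_index n = 0%N) /\
  (n < majorant (diag_index n).+1)%N.
Proof.
elim: n => [|n [IHle IHlt]] /=.
  by split; [right | exact: leq_trans (majorant_lt 0)].
have := majorant_lt (diag_index n).+1.
case: ifP => [le_n | /negbT]; first by split; [left | lia].
rewrite -ltnNge => lt_n _; split => //.
by case: IHle => [?|->]; [left; lia | right].
Qed.

End Diagonal.

Lemma diagonal_index (Q : nat -> nat -> Prop) :
  (forall k, \forall n \near \oo, Q k n) ->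
  exists2 c : nat -> nat, c @ \oo --> \oo & \forall n \near \oo, Q (c n) n.
Proof.
move=> HQ; have /choice[f Hf] : forall k, exists N, forall n, (N <= n)%N -> Q k n.
  by move=> k; have [N _ HN] := HQ k; exists N.
exists (diag_index f).
  apply/cvgnyPge => K; exists (majorant f K) => // n /= K_le_n.
  rewrite leqNgt; apply/negP => lt_K.
  have [_ n_lt] := diag_index_spec f n; have := majorant_mono f lt_K; lia.
exists (majorant f 0) => // n /= n_ge; apply: Hf.
have [[le_n|->] _] := diag_index_spec f n; last exact: leq_trans (majorant_ge f 0) n_ge.
exact: leq_trans (majorant_ge f _) le_n.
Qed.

Section OuterProbability.
Variables (R : realType) (d : measure_display) (T : measurableType d) (P : probability T R).

Lemma le_outerP (A B : set T) : A `<=` B -> (outerP P A <= outerP P B)%E.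
Proof.
move=> AB; apply: ereal_inf_le_tmp => _ [C [mC BC] <-].
by exists C => //; split => //; exact: subset_trans AB BC.
Qed.

End OuterProbability.

Lemma cvg0_eventually_le (R : realType) (u : nat -> \bar R) (eps : R) :
  u @ \oo --> 0%E -> 0 < eps -> \forall n \near \oo, (u n <= eps%:E)%E.
Proof.
move=> u0 eps_gt0; have /u0 := @nbhs_open_ereal_lt R 0 (fun=> eps) eps_gt0.
move=> u_lt; near=> n; apply: ltW; near: n; exact: u_lt.
Unshelve. all: by end_near.
Qed.

Definition cube (R : realType) (p : nat) (r : R) : set 'rV[R]_p :=
  [set v | forall i, `[- r, r]%classic (v 0 i)].

Lemma compact_cube (R : realType) (p : nat) (r : R) : compact (cube r : set 'rV[R]_p).
Proof.
by apply: (@rV_compact _ _ (fun=> `[- r, r]%classic)) => i; exact: segment_compact.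
Qed.

Lemma ecball0_sub_cube (R : realType) (p : nat) (r : R) :
  ecball 0 r `<=` (cube r : set 'rV[R]_p).
Proof.
move=> v; rewrite /ecball /= subr0 => v_le i.
by rewrite /= in_itv /= -ler_norml (le_trans (entry_le_enorm _ _)).
Qed.

Section LocalPosterior.
Variables (R : realType) (d : measure_display) (Tx : measurableType d) (p : nat).
Variables (rho : Tx -> 'rV[R]_p -> R) (prior : 'rV[R]_p -> R) (Theta : set 'rV[R]_p).
Variables (alpha : nat -> R) (V : 'M[R]_p) (tstar : 'rV[R]_p) (delta : R).
Hypotheses (alpha_gt0 : forall i, 0 < alpha i) (Vpd : posdef V).
Hypotheses (delta_gt0 : 0 < delta) (ball_sub : eball tstar delta `<=` Theta).
Hypotheses (prior_gt0 : forall t, eball tstar delta t -> 0 < prior t).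
Hypothesis prior_cont : {for tstar, continuous prior}.

Local Notation loc n x := (tstar + (sqn R n)^-1 *: x).

Lemma sqn_gt0 n : (0 < n)%N -> 0 < sqn R n.
Proof. by move=> n_gt0; rewrite sqrtr_gt0 ltr0n. Qed.

Lemma abar_gt0 n : (0 < n)%N -> 0 < abar alpha n.
Proof.
case: n => // n _; rewrite /abar mulr_gt0 ?invr_gt0 ?ltr0n // big_ord_recl.
by rewrite ltr_pwDl ?alpha_gt0 // sumr_ge0 // => i _; exact/ltW.
Qed.

Lemma piW_ratio n xs Z D g h : (0 < n)%N -> 0 < Z ->
  Theta (loc n g) -> Theta (loc n h) -> prior (loc n h) != 0 ->
  piW rho prior Theta alpha xs n Z tstar g / piW rho prior Theta alpha xs n Z tstar h =
  prior (loc n g) / prior (loc n h) *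
  expR ((LANrem rho alpha xs n V tstar D g + gauss_exponent (abar alpha n *: V) D g)
      - (LANrem rho alpha xs n V tstar D h + gauss_exponent (abar alpha n *: V) D h)).
Proof.
move=> n_gt0 Z_gt0 Theta_g Theta_h prior_h.
pose K := ((sqn R n) ^+ p)^-1 / Z * expR (- \sum_(i < n) alpha i * rho (xs i) tstar).
have K_gt0 : 0 < K by rewrite !mulr_gt0 ?expR_gt0 ?invr_gt0 ?exprn_gt0 ?sqn_gt0.
have piWE x : Theta (loc n x) -> piW rho prior Theta alpha xs n Z tstar x =
    K * expR (LANrem rho alpha xs n V tstar D x + gauss_exponent (abar alpha n *: V) D x)
      * prior (loc n x).
  move=> Theta_x; rewrite /piW /Mpost indicE mem_set //.
  have -> : expR (- \sum_(i < n) alpha i * rho (xs i) (loc n x)) =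
      expR (- \sum_(i < n) alpha i * rho (xs i) tstar) *
      expR (LANrem rho alpha xs n V tstar D x + gauss_exponent (abar alpha n *: V) D x).
    rewrite -expRD /LANrem; congr expR.
    have -> : \sum_(i < n) alpha i * (rho (xs i) tstar - rho (xs i) (loc n x)) =
        \sum_(i < n) alpha i * rho (xs i) tstar - \sum_(i < n) alpha i * rho (xs i) (loc n x).
      by rewrite -sumrB; apply: eq_bigr => i _; rewrite mulrBr.
    rewrite /gauss_exponent !bformZm; set S0 := \sum_(i < n) _; set S1 := \sum_(i < n) _.
    by field.
  by rewrite /= mulr1n mulr1 /K; field; rewrite !gt_eqF ?exprn_gt0 ?sqn_gt0.
rewrite expRB (piWE g Theta_g) (piWE h Theta_h).
by field; rewrite prior_h !gt_eqF ?expR_gt0.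
Qed.

Lemma fnE n xs Z D g h : (0 < n)%N -> 0 < Z ->
  Theta (loc n g) -> Theta (loc n h) -> prior (loc n h) != 0 ->
  fn rho prior Theta alpha xs n Z V tstar D g h =
  Num.max 0 (1 - prior (loc n g) / prior (loc n h) *
    expR (LANrem rho alpha xs n V tstar D g - LANrem rho alpha xs n V tstar D h)).
Proof.
move=> n_gt0 Z_gt0 Theta_g Theta_h prior_h; rewrite /fn /=.
have a_gt0 := abar_gt0 n_gt0.
set phi := Defs.normal_pdf _ _; set pw := piW _ _ _ _ _ _ _ _.
have -> : phi h * pw g / (pw h * phi g) = (phi h / phi g) * (pw g / pw h).
  by rewrite invfM; ring.
have VaT : (invmx ((abar alpha n)^-1 *: invmx V))^T = invmx ((abar alpha n)^-1 *: invmx V).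
  by rewrite invmx_scale_inv // linearZ /= Vpd.1.
rewrite /phi (normal_pdf_ratio D g h (det_scale_inv_gt0 Vpd a_gt0) VaT).
rewrite invmx_scale_inv // /pw (piW_ratio xs D n_gt0 Z_gt0 Theta_g Theta_h prior_h).
by rewrite mulrCA -expRD; congr (Num.max 0 (1 - _ * expR _)); ring.
Qed.

Lemma prior_ratio_near eta : 0 < eta -> exists2 c, 0 < c &
  forall a b, enorm (a - tstar) < c -> enorm (b - tstar) < c ->
  [/\ Theta a, Theta b, 0 < prior a, 0 < prior b & 1 - eta / 2 <= prior a / prior b].
Proof.
move=> eta_gt0; have ptstar_gt0 := prior_gt0 (eball_center tstar delta_gt0).
have gam_gt0 : 0 < prior tstar * eta / 4 by rewrite divr_gt0 ?mulr_gt0.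
have [r r_gt0 near_r] := (nbhs_ballP _ _).1 ((cvgrPdist_lt _ _).1 prior_cont _ gam_gt0).
exists (Num.min delta r) => [|a b]; first by rewrite lt_min delta_gt0.
have near_tstar t : enorm (t - tstar) < Num.min delta r ->
    eball tstar delta t /\ `|prior tstar - prior t| < prior tstar * eta / 4.
  rewrite lt_min => /andP[t_delta t_r]; split => //; apply: near_r.
  by rewrite -ball_normE /ball_ /= distrC (le_lt_trans (normr_le_enorm _)).
move=> /near_tstar[a_ball a_near] /near_tstar[b_ball b_near].
split; [exact: ball_sub | exact: ball_sub | exact: prior_gt0 | exact: prior_gt0 |].
exact: ratio_ge_of_near ptstar_gt0 (ltW (prior_gt0 a_ball)) (prior_gt0 b_ball) a_near b_near.
Qed.

Lemma loc_close (k : nat) c : 0 < c ->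
  \forall n \near \oo, forall x, ecball 0 k%:R x -> enorm (loc n x - tstar) < c.
Proof.
move=> c_gt0; near=> n => x; rewrite /ecball /= subr0 => x_le.
have sqn_gt : k%:R / c < sqn R n.
  rewrite -(ger0_norm (divr_ge0 (ler0n _ k) (ltW c_gt0))) -sqrtr_sqr ltr_sqrt.
    apply: (@lt_le_trans _ _ ((k%:R / c) ^+ 2 + 1)); first lra.
    by near: n; exact: nbhs_infty_ger.
  by rewrite ltr0n; near: n; exact: nbhs_infty_gt.
have sqn_pos : 0 < sqn R n by apply: le_lt_trans _ sqn_gt; rewrite divr_ge0 // ltW.
rewrite addrAC subrr add0r enormZ ger0_norm; last by rewrite invr_ge0; exact: ltW sqn_pos.
rewrite mulrC ltr_pdivrMr //.
by apply: le_lt_trans x_le _; rewrite mulrC -ltr_pdivrMr.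
Unshelve. all: by end_near.
Qed.

Lemma fn_le_of_LANrem_small (k : nat) eta : 0 < eta ->
  \forall n \near \oo, forall xs Z D, 0 < Z ->
    (forall x, ecball 0 k%:R x -> `|LANrem rho alpha xs n V tstar D x| <= eta / 4) ->
    forall g h, ecball 0 k%:R g -> ecball 0 k%:R h ->
    fn rho prior Theta alpha xs n Z V tstar D g h <= eta.
Proof.
move=> eta_gt0; have [c c_gt0 prior_near] := prior_ratio_near eta_gt0.
near=> n.
have n_gt0 : (0 < n)%N by near: n; exact: nbhs_infty_gt.
have close : forall x, ecball 0 k%:R x -> enorm (loc n x - tstar) < c.
  by near: n; exact: loc_close.
move=> xs Z D Z_gt0 LAN_small g h gk hk.
have [in_g in_h pg_gt0 ph_gt0 ratio_ge] := prior_near _ _ (close g gk) (close h hk).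
rewrite fnE ?gt_eqF //; apply: max0_1_mul_le => //.
- exact: ltW.
- by rewrite divr_ge0 ?ltW.
- exact: expRB_ge_of_small (LAN_small g gk) (LAN_small h hk).
Unshelve. all: by end_near.
Qed.

End LocalPosterior.

Theorem mainTheorem3
  (R : realType) (d d' : measure_display)
  (Omega : measurableType d) (P : probability Omega R)
  (Tx : measurableType d') (P0 : probability Tx R)
  (X : nat -> Omega -> Tx)              (* X i stands for X_{i+1} *)
  (p : nat) (Theta : set 'rV[R]_p) (tstar : 'rV[R]_p)
  (rho : Tx -> 'rV[R]_p -> R) (psi : Tx -> 'rV[R]_p -> 'rV[R]_p)
  (alpha : nat -> R)
  (thetahat : nat -> Omega -> 'rV[R]_p)
  (V : 'M[R]_p)                         (* V_{theta^*} of the weighted M-LAN condition *)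
  (prior : 'rV[R]_p -> R)
  (Z : nat -> Omega -> R)               (* normalising constant of the M-posterior *)
  (HX : iid P P0 X)
  (Hpsi : forall x theta (j : 'I_p), interior Theta theta ->
            is_derive theta (delta_mx 0 j : 'rV[R]_p) (rho x) (psi x theta 0 j))
  (Halpha_pos : forall i, 0 < alpha i)
  (Halpha_sq : exists C : R, exists N : nat, forall n : nat, (N <= n)%N ->
                 (n%:R)^-1 * \sum_(i < n) alpha i ^+ 2 <= C)
  (Hest_in : forall n w, thetahat n w \in Theta)
  (Hest : forall n w, \sum_(i < n) alpha i *: psi (X i w) (thetahat n w) = 0)
  (Hprior_nneg : forall theta, 0 <= prior theta)
  (HZ : forall n w, 0 < Z n w)
  (Hprior : exists delta : R, 0 < delta /\ eball tstar delta `<=` Theta /\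
             (forall theta, eball tstar delta theta ->
                {for theta, continuous prior} /\ 0 < prior theta))
  (HV : posdef V)
  (HLAN : forall K : set 'rV[R]_p, compact K -> forall e : R, 0 < e ->
       (fun n => outerP P [set w | exists2 h, K h &
           e < `|LANrem rho alpha (fun i => X i w) n V tstar
                    (Delta (thetahat n w) tstar n) h|])
       @ \oo --> 0%E) :
  forall eta eps : R, 0 < eta -> 0 < eps ->
    exists r : nat -> R, r @ \oo --> +oo /\
    exists N : nat, forall n : nat, (N < n)%N ->
      (outerP P [set w | exists g h, ecball 0 (r n) g /\ ecball 0 (r n) h /\
          (eta < fn rho prior Theta alpha (fun i => X i w) n (Z n w) V tstar
                   (Delta (thetahat n w) tstar n) g h)%R] <= eps%:E)%E.
Proof.
move=> eta eps eta_gt0 eps_gt0.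
have [delta [delta_gt0 [ball_sub prior_ball]]] := Hprior.
have prior_gt0 t : eball tstar delta t -> 0 < prior t by move/prior_ball => [].
have [prior_cont _] := prior_ball tstar (eball_center tstar delta_gt0).
have eta4_gt0 : 0 < eta / 4 by rewrite divr_gt0.
have bound_k (k : nat) : \forall n \near \oo,
    (outerP P [set w | exists g h, ecball 0 k%:R g /\ ecball 0 k%:R h /\
      (eta < fn rho prior Theta alpha (fun i => X i w) n (Z n w) V tstar
               (Delta (thetahat n w) tstar n) g h)%R] <= eps%:E)%E.
  have LAN_le := cvg0_eventually_le (HLAN _ (@compact_cube _ p k%:R) _ eta4_gt0) eps_gt0.
  have fn_small := fn_le_of_LANrem_small rho Halpha_pos HV delta_gt0 ball_sub prior_gt0
    prior_cont k eta_gt0.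
  apply: filterS2 fn_small LAN_le => n fn_le; apply: le_trans; apply: le_outerP.
  move=> w [g [h [gk [hk fn_gt]]]]; apply: contrapT => LAN_small.
  move: fn_gt; apply/negP; rewrite -leNgt; apply: fn_le gk hk => // x xk.
  rewrite leNgt; apply/negP => x_bad; apply: LAN_small.
  by exists x => //; exact: ecball0_sub_cube.
have [c c_cvg [N _ c_bound]] := diagonal_index bound_k.
exists (fun n => (c n)%:R); split; first exact/cvgrnyP.
by exists N => n /ltnW; exact: c_bound.
Qed.
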